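(* Let $G$ be a finite group, let $\alpha$ be an automorphism of $G$, and let $r>1$ and $s>1$ be coprime integers. For $x\in G$ and a positive integer $d$ put $N_d(x)=x\,\alpha(x)\,\alpha^2(x)\cdots\alpha^{d-1}(x)$. For a positive integer $m$ and $u,v\in G$, write $u\approx_m v$ if there is $z\in G$ with $v=z^{-1}u\,\alpha^m(z)$. Suppose $x,y\in G$ satisfy $N_r(x)\approx_r N_r(y)$ and $N_s(x)\approx_s N_s(y)$, but $N_d(x)\not\approx_d N_d(y)$ for every proper divisor $d$ of $r$ and every proper divisor $d$ of $s$. Then $|G|$ is divisible by $rs$ and $|G|\neq rs$. Furthermore, if $rs\equiv 2\pmod 4$, then $|G|$ is divisible by $2rs$.
   Context: A proper divisor of a positive integer $n$ is a positive divisor of $n$ strictly less than $n$ (so $1$ is a proper divisor of every $n>1$). The relation $\approx_m$ is the equivalence relation describing cohomologous cocycles in $H^1(\hat{\mathbb{Z}},G)$ when $1\in\hat{\mathbb{Z}}$ acts on $G$ via $\alpha^m$, cocycles being identified with their value at $1$. *)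

From mathcomp Require Import all_boot all_fingroup.
Set Implicit Arguments. Unset Strict Implicit. Unset Printing Implicit Defensive.
Local Open Scope group_scope.

Definition normN (gT : finGroupType) (alpha : gT -> gT) (d : nat) (x : gT) : gT :=
  \prod_(i < d) iter i alpha x.

Definition twisted_conj (gT : finGroupType) (alpha : gT -> gT) (m : nat) (u v : gT) : Prop :=
  exists z : gT, v = z^-1 * u * iter m alpha z.

From mathcomp Require Import all_boot all_fingroup all_solvable zify.
Set Implicit Arguments. Unset Strict Implicit. Unset Printing Implicit Defensive.
Local Open Scope group_scope.

(* The bijection f z = x * alpha z * y^-1 satisfies
   f^k z = N_k(x) * alpha^k z * N_k(y)^-1, so f^k fixes exactly the set T k of
   those z with z^-1 * N_k(x) * alpha^k z = N_k(y).  By the minimality of r,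
   every f-orbit in T r has length r; since T r is f-stable and is a right
   coset of the stabiliser subgroup H_r of N_r(x), r divides #|H_r|, hence
   #|G|.  As r and s are coprime, T r and T s are disjoint, so H_r * T s, whose
   order is a multiple of r * s, misses T r: thus #|G| > r * s.
   If rs = 2 mod 4, say r even and s odd, and 4 does not divide #|G|, then the
   kernel N of the sign of the regular representation has odd order and is
   alpha-invariant; s being odd, x and y have the same sign, so f preserves N,
   and counting f-orbits again shows that the even number r divides #|N|. *)

Lemma order_dvdn_iter (T : finType) (f : T -> T) n z :
  injective f -> iter n f z = z -> (fingraph.order f z %| n)%N.
Proof.
move=> injf fixz; set o := fingraph.order f z.
have iter_mulo k : iter (k * o) f z = z.
  by elim: k => // k IHk; rewrite mulSn iterD IHk iter_order.
have lt_mod : (n %% o < o)%N by rewrite ltn_pmod // fingraph.order_gt0.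
move: fixz; rewrite {1}(divn_eq n o) addnC iterD iter_mulo => fix_mod.
by have := findex_iter lt_mod; rewrite fix_mod findex0 /dvdn => <-.
Qed.

Lemma dvdn_double_mod4 m n : m %% 4 = 2 -> m %| n -> 4 %| n -> (2 * m %| n)%N.
Proof.
move=> m_mod4 m_dvd_n four_dvd_n.
have [k def_m] : exists k, m = (2 * k)%N by exists (m %/ 2); lia.
have co_4k : coprime 4 k by rewrite -[4]/(2 ^ 2)%N coprimeXl // coprime2n; lia.
rewrite def_m in m_dvd_n *.
by rewrite mulnA Gauss_dvd // four_dvd_n (dvdn_trans (dvdn_mull 2 (dvdnn k)) m_dvd_n).
Qed.

Lemma fclosed_stable (T : finType) (f : T -> T) (A : {set T}) :
  injective f -> {in A, forall z, f z \in A} -> fclosed f A.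
Proof.
by move=> injf fA; apply: (intro_closed (fconnect_sym injf)) => u _ /eqP <- /fA.
Qed.

Lemma dvdn_card_mulG (gT : finGroupType) (H K : {group gT}) :
  (#|H| %| #|H * K|) && (#|K| %| #|H * K|).
Proof.
have [c Kc] := dvdnP (cardSg (subsetIr H K)).
have [d Hd] := dvdnP (cardSg (subsetIl H K)).
have HK_gt0 := cardG_gt0 (H :&: K); have HK := mul_cardG H K.
apply/andP; split; apply/dvdnP; [exists c | exists d]; apply/eqP;
  rewrite -(eqn_pmul2r HK_gt0) -HK; [rewrite {1}Kc | rewrite {1}Hd]; apply/eqP; lia.
Qed.

Lemma rcosetI_group (gT : finGroupType) (H N : {group gT}) z :
  z \in N -> H :* z :&: N = (H :&: N) :* z.
Proof.
move=> zN; apply/setP => v; rewrite inE !mem_rcoset inE.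
by rewrite (groupMr _ (groupVr zN)).
Qed.

Lemma disjoint_rcoset_mulg (gT : finGroupType) (H : {group gT}) z (B : {set gT}) :
  [disjoint H :* z & B] -> [disjoint H :* z & H * B].
Proof.
move=> dis; apply/pred0P => v; apply/andP => -[vHz /mulsgP [w b wH bB def_v]].
have bHz : b \in H :* z.
  by rewrite -(mulKg w b) -def_v mem_rcoset -mulgA groupM ?groupV -?mem_rcoset.
by move/pred0P/(_ b): dis; rewrite /= bHz bB.
Qed.

Lemma autT_morphM (gT : finGroupType) (b : {perm gT}) :
  b \in Aut [set: gT] -> {morph b : u v / u * v}.
Proof. by move/Aut_morphic/morphicP => bM u v; apply: bM; rewrite inE. Qed.

Section RegularSign.

Variable gT : finGroupType.

Definition rsign (g : gT) := odd_perm (actperm 'R g).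

Lemma rsignM : {morph rsign : u v / u * v >-> u (+) v}.
Proof. by move=> u v; rewrite /rsign actpermM ?inE // odd_permM. Qed.

Lemma rsign1 : rsign 1 = false.
Proof. by rewrite /rsign morph1 odd_perm1. Qed.

Lemma rsignV u : rsign u^-1 = rsign u.
Proof. by rewrite /rsign morphV ?inE // odd_permV. Qed.

Lemma rsign_aut b u : b \in Aut [set: gT] -> rsign (b u) = rsign u.
Proof.
move=> bAut; rewrite /rsign -(odd_permJ (actperm 'R u) b); congr odd_perm.
apply/permP => z; rewrite conjgE !permM !actpermE /=.
by rewrite autT_morphM // permKV.
Qed.

(* An involution t acts on G as a product of #|G|/2 disjoint transpositions
   z <-> z * t. *)
Lemma rsign_involution t : #[t] = 2 -> ~~ (4 %| #|gT|) -> rsign t.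
Proof.
move=> ot n4; set P := porbits (actperm 'R t).
have card_gT : #|gT| = (#|P| * 2)%N.
  rewrite -cardsT; apply: card_uniform_partition.
    by move=> _ /imsetP [w _ ->]; rewrite porbit_actperm ?inE // orbitR card_lcoset -ot.
  have /orbit_partition : [acts <[t]>, on [set: gT] | 'R].
    by apply/actsP => g _ z; rewrite !inE.
  congr partition; apply/setP => B.
  by apply/imsetP/imsetP => -[z _ ->]; exists z; rewrite ?inE ?porbit_actperm ?inE.
rewrite /rsign /odd_perm -/P card_gT oddM andbF /=.
by apply: contraR n4; rewrite card_gT -dvdn2 -(@dvdn_pmul2r 2 2) // => ->.
Qed.

Definition rsign_ker := [set g : gT | ~~ rsign g].

Lemma group_set_rsign_ker : group_set rsign_ker.
Proof.
apply/group_setP; split=> [|u v]; first by rewrite inE rsign1.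
by rewrite !inE rsignM => /negbTE -> /negbTE ->.
Qed.

Canonical rsign_ker_group := group group_set_rsign_ker.

Lemma odd_card_rsign_ker : ~~ (4 %| #|gT|) -> odd #|rsign_ker|.
Proof.
move=> n4; apply/negPn/negP; rewrite -dvdn2 => /(Cauchy (isT : prime 2)) [t tN ot].
by move: tN; rewrite inE rsign_involution.
Qed.

End RegularSign.

Section TwistedConjugacy.

Variables (gT : finGroupType) (a : {perm gT}).
Hypothesis aAut : a \in Aut [set: gT].

Lemma iter_autM k : {morph iter k a : u v / u * v}.
Proof. by move=> u v; rewrite -!permX autT_morphM ?groupX. Qed.

Lemma iter_aut1 k : iter k a 1 = 1.
Proof. by rewrite -permX -(autmE (groupX k aAut)) morph1. Qed.

Lemma iter_autV k : {morph iter k a : u / u^-1}.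
Proof. by move=> u; rewrite -!permX -(autmE (groupX k aAut)) morphV ?inE. Qed.

Lemma autM : {morph a : u v / u * v}.
Proof. by move=> u v; have := iter_autM 1 u v. Qed.

Lemma autV : {morph a : u / u^-1}.
Proof. by move=> u; have := iter_autV 1 u. Qed.

Lemma normNS n x : normN a n.+1 x = x * a (normN a n x).
Proof.
rewrite /normN big_ord_recl (big_morph a autM (iter_aut1 1)).
by congr (_ * _); apply: eq_bigr.
Qed.

Definition twisted_sol m u v := [set z | v == z^-1 * u * iter m a z].
Definition twisted_stab m u := twisted_sol m u u.

Lemma twisted_conjP m u v :
  twisted_conj a m u v <-> exists z, z \in twisted_sol m u v.
Proof.
split=> -[z zuv]; exists z; first by rewrite inE zuv.
by apply/eqP; rewrite inE in zuv.
Qed.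

Lemma group_set_twisted_stab m u : group_set (twisted_stab m u).
Proof.
apply/group_setP; split=> [|z w]; first by rewrite inE invg1 mul1g iter_aut1 mulg1.
rewrite !inE iter_autM invMg => /eqP zu /eqP wu.
by rewrite !mulgA -(mulgA _ z^-1) -(mulgA _ _ (iter m a z)) -zu -wu.
Qed.

Canonical twisted_stab_group m u := group (group_set_twisted_stab m u).

Lemma twisted_sol_rcoset m u v z0 :
  z0 \in twisted_sol m u v -> twisted_sol m u v = twisted_stab m u :* z0.
Proof.
rewrite inE => /eqP ->; apply/setP => z; rewrite mem_rcoset !inE.
rewrite invMg invgK iter_autM iter_autV !mulgA.
rewrite -[in RHS](inj_eq (mulIg (iter m a z0))) -[in RHS](inj_eq (mulgI z0^-1)).
by rewrite mulgKV !mulgA mulVg mul1g.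
Qed.

Lemma rsign_iter k z : rsign (iter k a z) = rsign z.
Proof. by rewrite -permX rsign_aut ?groupX. Qed.

Lemma rsign_normN k x : rsign (normN a k x) = odd k && rsign x.
Proof.
elim: k => [|k IHk]; first by rewrite /normN big_ord0 rsign1.
by rewrite normNS rsignM (rsign_iter 1) IHk /=; case: (odd k); case: (rsign x).
Qed.

Definition twist x y z := x * a z * y^-1.

Lemma twist_inj x y : injective (twist x y).
Proof. by move=> u v /mulIg /mulgI /perm_inj. Qed.

Lemma iter_twist x y k z :
  iter k (twist x y) z = normN a k x * iter k a z * (normN a k y)^-1.
Proof.
elim: k => [|k IHk]; first by rewrite /normN !big_ord0 mul1g invg1 mulg1.
by rewrite iterS IHk /twist !normNS !autM autV invMg !mulgA.
Qed.

Section TwistOrbits.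

Variables x y : gT.
Local Notation T k := (twisted_sol k (normN a k x) (normN a k y)).

Definition nonconj_proper_divisors r := forall d, 0 < d -> d < r -> d %| r ->
  ~ twisted_conj a d (normN a d x) (normN a d y).

Lemma iter_twist_fixed k z : (iter k (twist x y) z == z) = (z \in T k).
Proof.
rewrite iter_twist inE eq_sym -(inj_eq (mulgI z^-1)) -(inj_eq (mulIg (normN a k y))).
by rewrite mulVg mul1g !mulgA mulgKV eq_sym.
Qed.

Lemma twist_sol k z : z \in T k -> twist x y z \in T k.
Proof. by rewrite -!iter_twist_fixed -iterSr iterS => /eqP ->. Qed.

Lemma twist_order r z :
  0 < r -> nonconj_proper_divisors r -> z \in T r -> fingraph.order (twist x y) z = r.
Proof.
move=> r_gt0 ncr zT; set o := fingraph.order _ z.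
have o_dvd : o %| r.
  apply: (order_dvdn_iter (f := twist x y)); first exact: twist_inj.
  by apply/eqP; rewrite iter_twist_fixed.
have zTo : z \in T o by rewrite -iter_twist_fixed iter_order //; apply: twist_inj.
have [o_lt | r_le_o] := ltnP o r; last by apply/eqP; rewrite eqn_leq r_le_o dvdn_leq.
by case: (ncr o (fingraph.order_gt0 _ _) o_lt o_dvd); apply/twisted_conjP; exists z.
Qed.

Lemma dvdn_card_twist_stable r (A : {set gT}) :
  0 < r -> nonconj_proper_divisors r -> A \subset T r ->
  {in A, forall z, twist x y z \in A} -> r %| #|A|.
Proof.
move=> r_gt0 ncr /subsetP sAT twistA.
rewrite -(fcard_order_set (@twist_inj x y) (n := r) (a := mem A)); first exact: dvdn_mull.
  by apply/subsetP => z zA; rewrite inE (twist_order r_gt0 ncr (sAT z zA)).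
exact: fclosed_stable (@twist_inj x y) twistA.
Qed.

Lemma dvdn_card_twisted_stab r :
  0 < r -> twisted_conj a r (normN a r x) (normN a r y) ->
  nonconj_proper_divisors r -> r %| #|twisted_stab r (normN a r x)|.
Proof.
move=> r_gt0 /twisted_conjP [z0 z0T] ncr.
rewrite -(card_rcoset _ z0) -(twisted_sol_rcoset z0T).
by apply: dvdn_card_twist_stable => // z; apply: twist_sol.
Qed.

Lemma dvdn_card_twisted r :
  0 < r -> twisted_conj a r (normN a r x) (normN a r y) ->
  nonconj_proper_divisors r -> r %| #|gT|.
Proof.
move=> r_gt0 conj_r ncr; apply: dvdn_trans (dvdn_card_twisted_stab r_gt0 conj_r ncr) _.
by rewrite -cardsT cardSg ?subsetT.
Qed.

Lemma disjoint_twisted_sol_coprime r s :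
  1 < r -> coprime r s -> nonconj_proper_divisors r -> [disjoint T r & T s].
Proof.
move=> r_gt1 co_rs ncr; apply/pred0P => z; apply/andP => -[zTr zTs].
have : fingraph.order (twist x y) z %| 1.
  by rewrite -(eqP co_rs) dvdn_gcd !(order_dvdn_iter (@twist_inj x y)) //;
    apply/eqP; rewrite iter_twist_fixed.
rewrite dvdn1 => /eqP order1.
have zT1 : z \in T 1.
  by rewrite -iter_twist_fixed -{1}order1 iter_order //; apply: twist_inj.
by apply: (ncr 1%N isT r_gt1 (dvd1n r)); apply/twisted_conjP; exists z.
Qed.

Lemma card_twisted_neq_mul r s :
  1 < r -> 1 < s -> coprime r s ->
  twisted_conj a r (normN a r x) (normN a r y) ->
  twisted_conj a s (normN a s x) (normN a s y) ->
  nonconj_proper_divisors r -> nonconj_proper_divisors s -> #|gT| <> (r * s)%N.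
Proof.
move=> r_gt1 s_gt1 co_rs conj_r conj_s ncr ncs card_rs.
have r_gt0 := ltnW r_gt1; have s_gt0 := ltnW s_gt1.
set Hr := twisted_stab_group r (normN a r x).
set Hs := twisted_stab_group s (normN a s x).
have [z0 z0Tr] := (twisted_conjP _ _ _).1 conj_r.
have [z1 z1Ts] := (twisted_conjP _ _ _).1 conj_s.
pose X := Hr * T s.
have disXT : [disjoint T r & X].
  rewrite (twisted_sol_rcoset z0Tr) disjoint_rcoset_mulg //.
  by rewrite -(twisted_sol_rcoset z0Tr) disjoint_twisted_sol_coprime.
have rs_dvdX : (r * s)%N %| #|X|.
  have /andP [HrX HsX] := dvdn_card_mulG Hr Hs.
  rewrite /X (twisted_sol_rcoset z1Ts) mulgA card_rcoset.
  rewrite Gauss_dvd // (dvdn_trans (dvdn_card_twisted_stab r_gt0 conj_r ncr)) //=.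
  by apply: dvdn_trans HsX; apply: dvdn_card_twisted_stab.
have X_lt : #|X| < #|gT|.
  have Tr_gt0 : 0 < #|T r| by apply/card_gt0P; exists z0.
  rewrite -(cardsC (T r)) -add1n leq_add // subset_leq_card //.
  by rewrite -disjoints_subset disjoint_sym.
have X_gt0 : 0 < #|X|.
  by apply/card_gt0P; exists z1; apply/mulsgP; exists 1 z1; rewrite ?group1 ?mul1g.
by move: (dvdn_leq X_gt0 rs_dvdX); rewrite -card_rs leqNgt X_lt.
Qed.

Lemma rsign_twist z : rsign x = rsign y -> rsign (twist x y z) = rsign z.
Proof.
by move=> xy; rewrite !rsignM rsignV (rsign_iter 1) xy; case: (rsign y); case: (rsign z).
Qed.

Lemma dvdn_card_rsign_ker r :
  0 < r -> twisted_conj a r (normN a r x) (normN a r y) ->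
  nonconj_proper_divisors r -> rsign x = rsign y -> r %| #|rsign_ker gT|.
Proof.
move=> r_gt0 conj_r ncr xy; set N := rsign_ker_group gT.
set H := twisted_stab_group r (normN a r x).
have [z0 z0T] := (twisted_conjP _ _ _).1 conj_r.
(* Either T r lies outside N, which forces H \subset N, or T r :&: N is a
   twist-stable coset of H :&: N. *)
have [TN0 | [z2 /setIP [z2T z2N]]] := set_0Vmem (T r :&: N).
  suff sHN : H \subset N.
    exact: dvdn_trans (dvdn_card_twisted_stab r_gt0 conj_r ncr) (cardSg sHN).
  have notN z : z \in T r -> rsign z.
    by move=> zT; apply/negbFE; rewrite -(in_set0 z) -TN0 in_setI zT inE.
  apply/subsetP => h hH; rewrite inE.
  have hz0T : h * z0 \in T r by rewrite (twisted_sol_rcoset z0T) mem_rcoset mulgK.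
  by move: (notN _ hz0T) (notN _ z0T); rewrite rsignM => /addbP ->.
have TN : T r :&: N = (H :&: N) :* z2.
  by rewrite (twisted_sol_rcoset z2T) rcosetI_group.
apply: dvdn_trans (cardSg (subsetIr H N)).
rewrite -(card_rcoset _ z2) -TN; apply: dvdn_card_twist_stable => //; first exact: subsetIl.
move=> z /setIP [zT zN]; rewrite inE twist_sol //.
by move: zN; rewrite !inE rsign_twist.
Qed.

Lemma four_dvdn_card r s :
  0 < r -> 2 %| r -> odd s ->
  twisted_conj a r (normN a r x) (normN a r y) ->
  twisted_conj a s (normN a s x) (normN a s y) ->
  nonconj_proper_divisors r -> 4 %| #|gT|.
Proof.
move=> r_gt0 r_even s_odd conj_r [z def_Ny] ncr; apply/idPn => n4.
have xy : rsign x = rsign y.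
  move: (congr1 (@rsign gT) def_Ny).
  rewrite !rsignM rsignV rsign_iter !rsign_normN s_odd /=.
  by case: (rsign z); case: (rsign x).
have r_dvdN := dvdn_card_rsign_ker r_gt0 conj_r ncr xy.
by move: (odd_card_rsign_ker n4); rewrite -[odd _]negbK -dvdn2 (dvdn_trans r_even r_dvdN).
Qed.

End TwistOrbits.

End TwistedConjugacy.

Theorem theorem6p1 (gT : finGroupType) (alpha : {perm gT})
  (Halpha : alpha \in Aut [set: gT]) (r s : nat) (x y : gT) :
  1 < r -> 1 < s -> coprime r s ->
  twisted_conj alpha r (normN alpha r x) (normN alpha r y) ->
  twisted_conj alpha s (normN alpha s x) (normN alpha s y) ->
  (forall d, 0 < d -> d < r -> d %| r ->
     ~ twisted_conj alpha d (normN alpha d x) (normN alpha d y)) ->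
  (forall d, 0 < d -> d < s -> d %| s ->
     ~ twisted_conj alpha d (normN alpha d x) (normN alpha d y)) ->
  (r * s %| #|gT|)%N /\ #|gT| <> (r * s)%N /\
  ((r * s) %% 4 = 2 -> (2 * (r * s)) %| #|gT|)%N.
Proof.
move=> r_gt1 s_gt1 co_rs conj_r conj_s ncr ncs.
have r_gt0 := ltnW r_gt1; have s_gt0 := ltnW s_gt1.
have rs_dvdG : (r * s %| #|gT|)%N.
  by rewrite Gauss_dvd // (dvdn_card_twisted Halpha r_gt0 conj_r ncr)
    (dvdn_card_twisted Halpha s_gt0 conj_s ncs).
split=> //; split.
  exact: (card_twisted_neq_mul Halpha r_gt1 s_gt1 co_rs conj_r conj_s ncr ncs).
move=> rs_mod4; have rs_even : ~~ odd (r * s) by lia.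
apply: dvdn_double_mod4 rs_mod4 rs_dvdG _.
have [r_odd | r_even] := boolP (odd r).
  have s_even : (2 %| s)%N by rewrite dvdn2; move: rs_even; rewrite oddM r_odd.
  exact: (four_dvdn_card Halpha s_gt0 s_even r_odd conj_s conj_r ncs).
have s_odd : odd s by rewrite -coprime2n (coprime_dvdl _ co_rs) // dvdn2.
by apply: (four_dvdn_card Halpha r_gt0 _ s_odd conj_r conj_s ncr); rewrite dvdn2.
Qed.
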